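(* Let $P$ be a set of $n$ colored points, each with a weight from a faithful semigroup $(\mathcal{S},+)$, and let $\Gamma$ be any optimal storage scheme for $P$ (for colored weighted dominance queries). Then each generator in $\Gamma$ contains points of only a single color.
   Context: Setting (arithmetic model): each point $p\in P$ has a color from $\{1,\dots,\phi\}$ and a weight $w(p)\in\mathcal{S}$; $P_c$ is the set of points of color $c$. A query $Q$ (a dominance range $(-\infty,q_1]\times\cdots\times(-\infty,q_d]$) asks for $w(P_c\cap Q)=\sum_{p\in P_c\cap Q}w(p)$ for every color $c$ with $P_c\cap Q\neq\emptyset$. A generator is a subset $G\subseteq P$ together with the stored value $\sum_{p\in G}w(p)$. A storage scheme is a collection $\Gamma$ of generators such that for every query $Q$ and every color $c$ with $P_c\cap Q\ne\emptyset$, the value $w(P_c\cap Q)$ can be obtained as a sum of (values of) generators from $\Gamma$, where the equality must hold for every assignment of weights from $\mathcal{S}$ to the points (the generator subsets being fixed). The size of $\Gamma$ is its number of generators; an optimal storage scheme is one minimizing the query cost (the number of generators summed). A semigroup $(\mathcal{S},+)$ is faithful if for every $n>0$, all $\emptyset\ne T_1,T_2\subseteq\{1,\dots,n\}$ with $T_1\neq T_2$, and all positive integers $\alpha_i$ ($i\in T_1$), $\beta_j$ ($j\in T_2$), the equation $\sum_{i\in T_1}\alpha_i s_i=\sum_{j\in T_2}\beta_j s_j$ is not an identity, i.e. it fails for some choice of $s_1,\dots,s_n\in\mathcal{S}$. *)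

From mathcomp Require Import all_boot all_order all_algebra.
Set Implicit Arguments. Unset Strict Implicit. Unset Printing Implicit Defensive.
Import Order.TTheory GRing.Theory Num.Theory.
Local Open Scope ring_scope.

(* ---- Sums in a semigroup without identity: lift to option S,
        None playing the role of the empty sum. ---- *)
Definition oplus (S : Type) (op : S -> S -> S) (a b : option S) : option S :=
  match a, b with
  | Some x, Some y => Some (op x y)
  | None, _ => b
  | _, None => a
  end.

Definition osum (S : Type) (op : S -> S -> S) (s : seq (option S)) : option S :=
  foldr (oplus op) None s.

(* k * x for k >= 1 : x + x + ... + x (k copies); meaningful for k >= 1 *)
Definition smul (S : Type) (op : S -> S -> S) (k : nat) (x : S) : S :=
  iter k.-1 (op x) x.

Definition wsum (S : Type) (op : S -> S -> S) (n : nat) (w : 'I_n -> S)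
  (A : {set 'I_n}) : option S :=
  osum op [seq Some (w p) | p <- enum A].

Definition faithful (S : Type) (op : S -> S -> S) : Prop :=
  forall (m : nat) (T1 T2 : {set 'I_m}) (alpha beta : 'I_m -> nat),
    T1 != set0 -> T2 != set0 -> T1 != T2 ->
    (forall i, i \in T1 -> (0 < alpha i)%N) ->
    (forall j, j \in T2 -> (0 < beta j)%N) ->
    exists s : 'I_m -> S,
      osum op [seq Some (smul op (alpha i) (s i)) | i <- enum T1]
      <> osum op [seq Some (smul op (beta j) (s j)) | j <- enum T2].

Definition in_query (R : realFieldType) (n d : nat) (pt : 'I_n -> 'I_d -> R)
  (q : 'I_d -> R) : {set 'I_n} :=
  [set p | [forall i, pt p i <= q i]].

Definition color_class (n phi : nat) (col : 'I_n -> 'I_phi) (c : 'I_phi)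
  : {set 'I_n} := [set p | col p == c].

(* gs (a list of generators of Gamma, repetitions allowed) represents
   w(P_c ∩ Q) for every assignment of weights *)
Definition represents (S : Type) (op : S -> S -> S) (n : nat)
  (Gamma : {set {set 'I_n}}) (gs : seq {set 'I_n}) (A : {set 'I_n}) : Prop :=
  all (fun g => g \in Gamma) gs /\
  forall w : 'I_n -> S, osum op [seq wsum op w g | g <- gs] = wsum op w A.

Definition query_cost_le (S : Type) (op : S -> S -> S) (R : realFieldType)
  (n d phi : nat) (pt : 'I_n -> 'I_d -> R) (col : 'I_n -> 'I_phi)
  (Gamma : {set {set 'I_n}}) (k : nat) : Prop :=
  forall (q : 'I_d -> R) (c : 'I_phi),
    color_class col c :&: in_query pt q != set0 ->
    exists gs, (size gs <= k)%N /\
      represents op Gamma gs (color_class col c :&: in_query pt q).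

Definition storage_scheme (S : Type) (op : S -> S -> S) (R : realFieldType)
  (n d phi : nat) (pt : 'I_n -> 'I_d -> R) (col : 'I_n -> 'I_phi)
  (Gamma : {set {set 'I_n}}) : Prop :=
  forall (q : 'I_d -> R) (c : 'I_phi),
    color_class col c :&: in_query pt q != set0 ->
    exists gs, represents op Gamma gs (color_class col c :&: in_query pt q).

(* Optimal = Pareto-optimal w.r.t. (query cost, size): no storage scheme has
   query cost <= and size <=, with one of them strictly smaller.
   (cost Gamma' <= cost Gamma is expressed as: every bound k achieved by
   Gamma is achieved by Gamma'.) *)
Definition optimal_scheme (S : Type) (op : S -> S -> S) (R : realFieldType)
  (n d phi : nat) (pt : 'I_n -> 'I_d -> R) (col : 'I_n -> 'I_phi)
  (Gamma : {set {set 'I_n}}) : Prop :=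
  storage_scheme op pt col Gamma /\
  ~ (exists Gamma' : {set {set 'I_n}},
       storage_scheme op pt col Gamma' /\
       (forall k, query_cost_le op pt col Gamma k ->
                  query_cost_le op pt col Gamma' k) /\
       (#|Gamma'| <= #|Gamma|)%N /\
       ((exists k, query_cost_le op pt col Gamma' k /\
                   ~ query_cost_le op pt col Gamma k)
        \/ (#|Gamma'| < #|Gamma|)%N)).

From mathcomp Require Import all_boot all_order all_algebra.
Import Order.TTheory GRing.Theory Num.Theory.
Local Open Scope ring_scope.
Set Implicit Arguments. Unset Strict Implicit.

(* In a faithful commutative semigroup, an identity between two nonempty formal
   sums forces both sums to involve exactly the same variables.  Hence every
   generator used to express w(P_c ∩ Q) is a subset of P_c ∩ Q, so it is
   monochromatic. *)

Section SemigroupSums.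

Local Open Scope nat_scope.

Variables (S : Type) (op : S -> S -> S).
Hypotheses (opA : associative op) (opC : commutative op).

Local Notation oadd := (oAC opA opC).

Lemma oplusE : oplus op =2 oadd.
Proof. by case=> [x|] [y|]. Qed.

Lemma osumE (s : seq (option S)) : osum op s = \big[oadd/None]_(x <- s) x.
Proof.
by elim: s => [|x s IHs]; rewrite ?big_nil ?big_cons //= -IHs oplusE.
Qed.

Lemma osum_map (I : Type) (r : seq I) (F : I -> S) :
  osum op [seq Some (F i) | i <- r] = \big[oadd/None]_(i <- r) Some (F i).
Proof. by rewrite osumE big_map. Qed.

Lemma iterop_oadd k x : iterop k.+1 oadd (Some x) None = Some (smul op k.+1 x).
Proof. by rewrite iteropS /smul; elim: k => //= k ->. Qed.

Lemma big_Some_count_mem (I : finType) (l : seq I) (F : I -> S) :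
  \big[oadd/None]_(i <- l) Some (F i) =
  \big[oadd/None]_(i in l) Some (smul op (count_mem i l) (F i)).
Proof.
rewrite -big_undup_iterop_count big_uniq ?undup_uniq //.
rewrite (eq_bigl (mem l)) => [|i]; last by rewrite mem_undup.
apply: eq_bigr => i l_i.
have : 0 < count_mem i l by rewrite -has_count has_pred1.
by case: (count_mem i l) => // k _; rewrite iterop_oadd.
Qed.

Lemma faithful_mem_eq (hF : faithful op) (m : nat) (l1 l2 : seq 'I_m) :
  l1 != [::] -> l2 != [::] ->
  (forall w : 'I_m -> S,
     \big[oadd/None]_(i <- l1) Some (w i) = \big[oadd/None]_(i <- l2) Some (w i)) ->
  l1 =i l2.
Proof.
move=> ne_l1 ne_l2 eq_l12.
suff /setP eq_set : [set i in l1] = [set i in l2].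
  by move=> i; have := eq_set i; rewrite !inE.
apply/eqP/contraT => neq_l12.
have set0_mem (l : seq 'I_m) : l != [::] -> [set i in l] != set0.
  by case: l => // i l _; apply/set0Pn; exists i; rewrite inE mem_head.
have count_gt0 (l : seq 'I_m) i : i \in [set i in l] -> 0 < count_mem i l.
  by rewrite inE -has_pred1 has_count.
have [s] := hF m _ _ (fun i => count_mem i l1) (fun i => count_mem i l2)
  (set0_mem _ ne_l1) (set0_mem _ ne_l2) neq_l12 (count_gt0 l1) (count_gt0 l2).
rewrite !osum_map !big_enum.
under eq_bigl do rewrite inE; under [X in _ <> X]eq_bigl do rewrite inE.
by rewrite -!big_Some_count_mem.
Qed.

Lemma osum_wsum (n : nat) (w : 'I_n -> S) (gs : seq {set 'I_n}) :
  osum op [seq wsum op w g | g <- gs] =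
  \big[oadd/None]_(p <- flatten [seq enum g | g : {set 'I_n} <- gs]) Some (w p).
Proof.
rewrite osumE big_map big_flatten big_map.
by apply: eq_bigr => g _; rewrite /wsum osum_map.
Qed.

Lemma represents_subset (hF : faithful op) (n : nat) (Gamma : {set {set 'I_n}})
  (gs : seq {set 'I_n}) (A : {set 'I_n}) :
  represents op Gamma gs A -> A != set0 -> forall g, g \in gs -> g \subset A.
Proof.
move=> [_ eq_w] /set0Pn[a Aa] g gs_g; apply/subsetP => p g_p.
pose l := flatten [seq enum h | h : {set 'I_n} <- gs].
have l_p : p \in l by apply/flatten_mapP; exists g; rewrite ?mem_enum.
have eq_mem : l =i enum A.
  apply: (faithful_mem_eq hF).
  - by apply: contraTneq l_p => ->.
  - by rewrite -mem_enum in Aa; apply: contraTneq Aa => ->.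
  - by move=> w; rewrite -osum_wsum eq_w /wsum osum_map.
by rewrite -mem_enum -eq_mem.
Qed.

End SemigroupSums.

Section OptimalSchemes.

Variables (S : Type) (op : S -> S -> S) (R : realFieldType) (n d phi : nat).
Variables (pt : 'I_n -> 'I_d -> R) (col : 'I_n -> 'I_phi).

Lemma represents_setD1 (Gamma : {set {set 'I_n}}) (gs : seq {set 'I_n})
  (A g : {set 'I_n}) :
  represents op Gamma gs A -> g \notin gs -> represents op (Gamma :\ g) gs A.
Proof.
move=> [/allP Gamma_gs eq_w] g_unused; split=> //; apply/allP => h gs_h.
by rewrite !inE Gamma_gs // andbT; apply: contraNneq g_unused => <-.
Qed.

Lemma optimal_scheme_generator_used (Gamma : {set {set 'I_n}}) :
  optimal_scheme op pt col Gamma -> forall g, g \in Gamma ->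
  ~ (forall q c gs, color_class col c :&: in_query pt q != set0 ->
       represents op Gamma gs (color_class col c :&: in_query pt q) ->
       g \notin gs).
Proof.
move=> [scheme_Gamma not_better] g Gamma_g unused_g; apply: not_better.
have drop_g q c gs : color_class col c :&: in_query pt q != set0 ->
    represents op Gamma gs (color_class col c :&: in_query pt q) ->
    represents op (Gamma :\ g) gs (color_class col c :&: in_query pt q).
  by move=> nonempty rep; apply: represents_setD1 rep (unused_g _ _ _ nonempty rep).
exists (Gamma :\ g); split; last split; last split.
- move=> q c nonempty; have [gs rep] := scheme_Gamma q c nonempty.
  by exists gs; apply: drop_g.
- move=> k cost_k q c nonempty; have [gs [size_gs rep]] := cost_k q c nonempty.
  by exists gs; split; last apply: drop_g.
- by rewrite (cardsD1 g Gamma) leq_addl.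
- by right; rewrite (cardsD1 g Gamma) Gamma_g.
Qed.

End OptimalSchemes.

Theorem lemma7 (S : Type) (op : S -> S -> S)
  (opA : associative op) (opC : commutative op) (hF : faithful op)
  (R : realFieldType) (n d phi : nat)
  (pt : 'I_n -> 'I_d -> R) (col : 'I_n -> 'I_phi)
  (Gamma : {set {set 'I_n}}) :
  optimal_scheme op pt col Gamma ->
  forall g, g \in Gamma ->
    forall p p', p \in g -> p' \in g -> col p = col p'.
Proof.
move=> opt_Gamma g Gamma_g p p' g_p g_p'.
have [//|/eqP neq_col] := eqVneq (col p) (col p'); exfalso.
apply: (optimal_scheme_generator_used opt_Gamma Gamma_g) => q c gs nonempty rep.
apply/negP => gs_g; apply: neq_col.
have /subsetP sub_g := represents_subset opA opC hF rep nonempty gs_g.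
have col_c x : x \in g -> col x = c by move/sub_g; rewrite !inE => /andP[/eqP].
by rewrite !col_c.
Qed.
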